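(* For every positive integer $n$ there is a permutation of length $16n\log_2 n+\Theta(n)$ that contains every skew riffle permutation of length $n$ as a pattern.
   Context: A permutation $\pi$ of length $k$ is a pattern of $\sigma$ if there are indices $\ell_1<\cdots<\ell_k$ with $\pi_i<\pi_j$ iff $\sigma_{\ell_i}<\sigma_{\ell_j}$. Riffle shuffle permutations are the permutations avoiding $321$, $2143$ and $2413$; antiriffle permutations are the inverses of riffle shuffle permutations. For permutations $\sigma,\tau$, the operation $\sigma\ominus\tau$ (called skew sum in the paper) is the permutation of length $|\sigma|+|\tau|$ with $(\sigma\ominus\tau)_i=\sigma_i$ for $1\le i\le|\sigma|$ and $(\sigma\ominus\tau)_i=\tau_{i-|\sigma|}+|\sigma|$ for $|\sigma|<i\le|\sigma|+|\tau|$. The skew riffle permutations form the smallest set of permutations containing all riffle and antiriffle permutations and closed under this operation. *)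

From mathcomp Require Import all_boot.
From Stdlib Require Import Reals.
Set Implicit Arguments. Unset Strict Implicit. Unset Printing Implicit Defensive.

Definition is_perm (s : seq nat) : bool := perm_eq s (iota 1 (size s)).

Definition order_iso (t p : seq nat) : Prop :=
  size t = size p /\
  forall i j, i < size p -> j < size p ->
    (nth 0 p i < nth 0 p j) = (nth 0 t i < nth 0 t j).

Definition contains (s p : seq nat) : Prop :=
  exists t, subseq t s /\ order_iso t p.

Definition avoids (s p : seq nat) : Prop := ~ contains s p.

Definition riffle (s : seq nat) : Prop :=
  is_perm s /\ avoids s [:: 3; 2; 1] /\ avoids s [:: 2; 1; 4; 3]
  /\ avoids s [:: 2; 4; 1; 3].

Definition perm_inv (s : seq nat) : seq nat :=
  [seq (index i s).+1 | i <- iota 1 (size s)].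

Definition antiriffle (s : seq nat) : Prop :=
  exists r, riffle r /\ s = perm_inv r.

(* the operation called "skew sum" in the paper, as defined there *)
Definition ssum (s t : seq nat) : seq nat := s ++ [seq x + size s | x <- t].

Inductive skew_riffle : seq nat -> Prop :=
| SR_riffle s : riffle s -> skew_riffle s
| SR_antiriffle s : antiriffle s -> skew_riffle s
| SR_sum s t : skew_riffle s -> skew_riffle t -> skew_riffle (ssum s t).

Definition log2R (x : R) : R := (ln x / ln 2)%R.

From mathcomp Require Import all_boot zify.
Set Implicit Arguments. Unset Strict Implicit. Unset Printing Implicit Defensive.

(* A riffle permutation is a shuffle of the increasing runs 1..k and k+1..m:
   avoiding 321, 2143 and 2413 forces every value lying below a larger earlier
   value to be smaller than every value lying above a smaller later one.  Hence
   every riffle of length at most M is a pattern of the interleaving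
   M+1, 1, M+2, 2, ..., 2M, M, every antiriffle one of 1, 3, ..., 2M-1, 2, 4, ..., 2M,
   and their sum [block_univ M] contains both kinds of blocks.  A skew riffle
   permutation is a sum of blocks, and [sr_univ k.+1], the sum of [sr_univ k],
   [block_univ (2 ^ k.+1)] and [sr_univ k], contains every sum of blocks of total
   length below 2 ^ k.+1: the block straddling position 2 ^ k goes into the middle
   and the blocks before and after it into the two copies of [sr_univ k].  For
   2 ^ j <= n < 2 ^ j.+1, [sr_univ j.+1] has length 8 (j+1) 2 ^ j <= 8 n (log2 n + 1),
   and an increasing tail pads it to length 16 n log2 n + Theta(n). *)

Lemma mem_perm (s : seq nat) x : is_perm s -> (x \in s) = (0 < x <= size s).
Proof. by move=> ps; rewrite (perm_mem ps) mem_iota add1n ltnS. Qed.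

Lemma is_perm_uniq (s : seq nat) : is_perm s -> uniq s.
Proof. by move=> ps; rewrite (perm_uniq ps) iota_uniq. Qed.

Lemma uniq_bounded_is_perm (s : seq nat) :
  uniq s -> (forall x, x \in s -> 0 < x <= size s) -> is_perm s.
Proof.
move=> us bs; have sub : {subset s <= iota 1 (size s)}.
  by move=> x /bs; rewrite mem_iota add1n ltnS.
apply: uniq_perm => //; first exact: iota_uniq.
by apply: (uniq_min_size us sub _).2; rewrite size_iota.
Qed.

Lemma iota_is_perm m : is_perm (iota 1 m).
Proof. by rewrite /is_perm size_iota. Qed.

Lemma size_ssum (s t : seq nat) : size (ssum s t) = size s + size t.
Proof. by rewrite /ssum size_cat size_map. Qed.

Lemma ssum_perm (s t : seq nat) : is_perm s -> is_perm t -> is_perm (ssum s t).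
Proof.
rewrite /is_perm size_ssum iotaD => ps pt; apply: perm_cat => //.
rewrite addnC iotaDl (eq_map (fun x => addnC x (size s))); exact: perm_map.
Qed.

Lemma perm_inv_perm (r : seq nat) : is_perm r -> is_perm (perm_inv r).
Proof.
move=> pr; apply: uniq_bounded_is_perm.
  rewrite map_inj_in_uniq ?iota_uniq // => i j.
  rewrite -!(perm_mem pr) => ir jr [e].
  by rewrite -(nth_index 0 ir) -(nth_index 0 jr) e.
rewrite size_map size_iota => x /mapP [i]; rewrite -(perm_mem pr) => ir ->.
by rewrite -index_mem in ir.
Qed.

Definition embeds (s p : seq nat) : Prop :=
  exists f : nat -> nat,
    {in p &, forall x y, x < y -> f x < f y} /\ subseq (map f p) s.

Lemma embeds_contains s p : embeds s p -> contains s p.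
Proof.
case=> f [mf sub]; exists (map f p); split=> //; split; first by rewrite size_map.
move=> i j ip jp; rewrite !(nth_map 0) //.
have xi := mem_nth 0 ip; have xj := mem_nth 0 jp.
case: (ltngtP (nth 0 p i) (nth 0 p j)) => h.
- by rewrite mf.
- by rewrite ltnNge ltnW // mf.
- by rewrite h !ltnn.
Qed.

Lemma embeds_nil s : embeds s [::].
Proof. by exists (fun x => x); split; [move=> x y; rewrite in_nil | exact: sub0seq]. Qed.

Lemma embeds_ssuml (s t p : seq nat) : embeds s p -> embeds (ssum s t) p.
Proof.
case=> f [mf sub]; exists f; split=> //.
exact: subseq_trans sub (prefix_subseq _ _).
Qed.

Lemma embeds_ssumr (s t p : seq nat) : embeds t p -> embeds (ssum s t) p.
Proof.
case=> f [mf sub]; exists (fun x => f x + size s); split.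
  by move=> x y xp yp h; rewrite ltn_add2r; apply: mf.
apply: subseq_trans (suffix_subseq s _).
by rewrite (map_comp (addn^~ (size s)) f); apply: map_subseq.
Qed.

Lemma embeds_ssum (s1 s2 p1 p2 : seq nat) :
  is_perm s1 -> is_perm s2 -> is_perm p1 -> is_perm p2 ->
  embeds s1 p1 -> embeds s2 p2 -> embeds (ssum s1 s2) (ssum p1 p2).
Proof.
move=> ps1 ps2 pp1 pp2 [f1 [mf1 sub1]] [f2 [mf2 sub2]].
have f1_in x : x \in p1 -> 0 < f1 x <= size s1.
  by move=> xp; rewrite -(mem_perm _ ps1) (mem_subseq sub1) ?map_f.
have f2_in x : x \in p2 -> 0 < f2 x <= size s2.
  by move=> xp; rewrite -(mem_perm _ ps2) (mem_subseq sub2) ?map_f.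
have p1_in x : x \in p1 -> 0 < x <= size p1 by rewrite (mem_perm _ pp1).
have p2_in x : x \in p2 -> 0 < x <= size p2 by rewrite (mem_perm _ pp2).
pose f x := if x <= size p1 then f1 x else f2 (x - size p1) + size s1.
have f_low x : x \in p1 -> f x = f1 x.
  by move=> /p1_in xp; rewrite /f ifT //; lia.
have f_high x : x \in p2 -> f (x + size p1) = f2 x + size s1.
  by move=> /p2_in xp; rewrite /f ifF ?addnK //; lia.
exists f; split.
  move=> x y; rewrite !mem_cat.
  case/orP=> [xp|/mapP[x' xp ->]]; case/orP=> [yp|/mapP[y' yp ->]] lt.
  - by rewrite !f_low // mf1.
  - by rewrite f_low // f_high //; move: (f1_in _ xp) (f2_in _ yp); lia.
  - by move: (p1_in _ yp) (p2_in _ xp) lt; lia.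
  - by rewrite !f_high // ltn_add2r mf2 // -(ltn_add2r (size p1)).
rewrite map_cat ((eq_in_map _ _ _).1 f_low) -map_comp ((eq_in_map _ _ _).1 f_high).
by rewrite (map_comp (addn^~ (size s1)) f2); apply: cat_subseq => //; apply: map_subseq.
Qed.

Lemma ssum0s (t : seq nat) : ssum [::] t = t.
Proof. by rewrite /ssum /= (eq_map addn0) map_id. Qed.

Lemma ssumA (a b c : seq nat) : ssum (ssum a b) c = ssum a (ssum b c).
Proof.
rewrite /ssum size_cat size_map map_cat -catA -map_comp; do 2 congr (_ ++ _).
by apply: eq_map => x /=; rewrite addnAC addnA.
Qed.

Definition ssum_list (bs : seq (seq nat)) : seq nat := foldr ssum [::] bs.

Lemma ssum_list_cat bs1 bs2 :
  ssum_list (bs1 ++ bs2) = ssum (ssum_list bs1) (ssum_list bs2).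
Proof. by elim: bs1 => [|b bs IH] /=; rewrite ?ssum0s // IH ssumA. Qed.

Lemma ssum_list_perm bs : all is_perm bs -> is_perm (ssum_list bs).
Proof. by elim: bs => [|b bs IH] //= /andP [pb pbs]; apply: ssum_perm; last exact: IH. Qed.

Lemma ssum_list_split bs N : size (ssum_list bs) <= N \/
  exists bs1 b bs2, bs = bs1 ++ b :: bs2 /\
    size (ssum_list bs1) <= N < size (ssum_list bs1) + size b.
Proof.
elim: bs N => [|b bs IH] N /=; first by left.
rewrite size_ssum; case: (ltnP N (size b)) => Nb.
  by right; exists [::], b, bs.
case: (IH (N - size b)) => [small|[bs1 [c [bs2 [-> cut]]]]]; first by left; lia.
by right; exists (b :: bs1), c, bs2; rewrite /= size_ssum; split=> //; lia.
Qed.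

Definition riffle_block (p : seq nat) : Prop := riffle p \/ antiriffle p.

Lemma skew_riffle_blocks p : skew_riffle p ->
  exists bs, {in bs, forall b, riffle_block b} /\ p = ssum_list bs.
Proof.
elim=> [s rs|s ars|s t _ [bs1 [H1 ->]] _ [bs2 [H2 ->]]].
- by exists [:: s]; split; [move=> b /[1!inE] /eqP ->; left | rewrite /= /ssum cats0].
- by exists [:: s]; split; [move=> b /[1!inE] /eqP ->; right | rewrite /= /ssum cats0].
- exists (bs1 ++ bs2); split; last by rewrite ssum_list_cat.
  by move=> b; rewrite mem_cat => /orP[/H1|/H2].
Qed.

Lemma sorted_subseq_iota (l : seq nat) M :
  sorted ltn l -> all (fun x => x < M) l -> subseq l (iota 0 M).
Proof.
move=> sl /allP lM; have -> : l = [seq x <- iota 0 M | x \in l].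
  apply: (irr_sorted_eq ltn_trans ltnn) => //.
    by apply: sorted_filter; [exact: ltn_trans | exact: iota_ltn_sorted].
  by move=> x; rewrite mem_filter mem_iota; case xl: (x \in l) => //=; rewrite lM.
exact: filter_subseq.
Qed.

Section Positions.
Variables (T : eqType) (x0 : T) (r : seq T).

Lemma index_subseq_iota (xs : seq T) : {subset xs <= r} ->
  sorted ltn (map (index^~ r) xs) -> subseq (map (index^~ r) xs) (iota 0 (size r)).
Proof.
move=> xr sx; apply: sorted_subseq_iota => //.
by apply/allP => _ /mapP [x /xr xin ->]; rewrite index_mem.
Qed.

Lemma subseq_by_index (xs : seq T) : {subset xs <= r} ->
  sorted ltn (map (index^~ r) xs) -> subseq xs r.
Proof.
move=> xr sx; rewrite -[r in subseq _ r](mkseq_nth x0).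
have -> : xs = map (nth x0 r) (map (index^~ r) xs).
  by rewrite -map_comp -[LHS]map_id; apply/eq_in_map => x /xr /= xin; rewrite nth_index.
exact/map_subseq/index_subseq_iota.
Qed.

End Positions.

Section PatternOccurrences.
Variable r : seq nat.

Lemma contains_at (xs p : seq nat) : all (mem r) xs ->
  sorted ltn (map (index^~ r) xs) -> order_iso xs p -> contains r p.
Proof. by move=> /allP xr sx oi; exists xs; split=> //; apply: subseq_by_index 0 _ _ xr sx. Qed.

Lemma contains_321 x y z : x \in r -> y \in r -> z \in r ->
  index x r < index y r < index z r -> z < y < x -> contains r [:: 3; 2; 1].
Proof.
move=> xr yr zr ixyz zyx; apply: (@contains_at [:: x; y; z]).
- by rewrite /= xr yr zr.
- by rewrite /=; lia.
split=> // i j.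
by case: i => [|[|[|i]]]; case: j => [|[|[|j]]] //= _ _; apply/idP/idP; lia.
Qed.

Lemma contains_2143 a b c d : a \in r -> b \in r -> c \in r -> d \in r ->
  index a r < index b r < index c r /\ index c r < index d r ->
  b < a < d /\ d < c -> contains r [:: 2; 1; 4; 3].
Proof.
move=> ar br cr dr iabcd vals; apply: (@contains_at [:: a; b; c; d]).
- by rewrite /= ar br cr dr.
- by rewrite /=; lia.
split=> // i j.
by case: i => [|[|[|[|i]]]]; case: j => [|[|[|[|j]]]] //= _ _; apply/idP/idP; lia.
Qed.

Lemma contains_2413 a b c d : a \in r -> b \in r -> c \in r -> d \in r ->
  index a r < index b r < index c r /\ index c r < index d r ->
  c < a < d /\ d < b -> contains r [:: 2; 4; 1; 3].
Proof.
move=> ar br cr dr iabcd vals; apply: (@contains_at [:: a; b; c; d]).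
- by rewrite /= ar br cr dr.
- by rewrite /=; lia.
split=> // i j.
by case: i => [|[|[|[|i]]]]; case: j => [|[|[|[|j]]]] //= _ _; apply/idP/idP; lia.
Qed.

End PatternOccurrences.

Definition inversion (r : seq nat) (a b : nat) : bool := (b < a) && (index a r < index b r).

Lemma index_neq_cases (r : seq nat) x y : x \in r -> y \in r -> x != y ->
  (index x r < index y r) || (index y r < index x r).
Proof.
move=> xr yr /eqP neq; case: ltngtP => // e; case: neq.
by rewrite -(nth_index 0 xr) -(nth_index 0 yr) e.
Qed.

Lemma riffle_inversion_sep r a1 b1 a2 b2 : riffle r ->
  a1 \in r -> b1 \in r -> a2 \in r -> b2 \in r ->
  inversion r a1 b1 -> inversion r a2 b2 -> b1 < a2.
Proof.
case=> _ [no321 [no2143 no2413]] ra1 rb1 ra2 rb2 /andP [i1 p1] /andP [i2 p2].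
(* Otherwise b2 < a2 <= b1 < a1, and every relative order of their positions
   exhibits a 321, 2143 or 2413. *)
rewrite ltnNge; apply/negP => a2b1.
have [a2_b1|a2_lt_b1] : a2 = b1 \/ a2 < b1 by lia.
  by apply: no321; apply: (contains_321 ra1 rb1 rb2); rewrite a2_b1 in p2 i2; lia.
have a1a2 : a1 != a2 by apply/eqP; lia.
have b2a1 : b2 != a1 by apply/eqP; lia.
have b2b1 : b2 != b1 by apply/eqP; lia.
case/orP: (index_neq_cases ra1 ra2 a1a2) => q1.
  by apply: no321; apply: (contains_321 ra1 ra2 rb2); lia.
case/orP: (index_neq_cases rb2 ra1 b2a1) => q2.
  by apply: no2143; apply: (contains_2143 ra2 rb2 ra1 rb1); lia.
case/orP: (index_neq_cases rb2 rb1 b2b1) => q3.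
  by apply: no2413; apply: (contains_2413 ra2 ra1 rb2 rb1); lia.
by apply: no321; apply: (contains_321 ra1 rb1 rb2); lia.
Qed.

Lemma riffle_threshold r : riffle r -> exists k, forall x y, x \in r -> y \in r ->
  x < y -> (y <= k) || (k < x) -> index x r < index y r.
Proof.
move=> rr; pose inverted b := has (fun a => inversion r a b) r.
exists (\max_(b <- r | inverted b) b) => x y xr yr xy hk.
have /orP [//|yx] := index_neq_cases xr yr (negbT (ltn_eqF xy)).
have x_le : x <= \max_(b <- r | inverted b) b.
  by apply: (leq_bigmax_seq x xr); apply/hasP; exists y; rewrite // /inversion xy.
have le_y : \max_(b <- r | inverted b) b <= y.-1.
  apply/bigmax_leqP_seq => b br /hasP [a ar inv_ab].
  have := riffle_inversion_sep rr ar br yr xr inv_ab; rewrite /inversion xy yx => /(_ isT).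
  lia.
by move: hk; lia.
Qed.

Fixpoint interleave (a b m : nat) : seq nat :=
  if m is m'.+1 then a :: b :: interleave a.+1 b.+1 m' else [::].

Definition riffle_univ M := interleave M.+1 1 M.

Definition antiriffle_univ M :=
  [seq j.*2.+1 | j <- iota 0 M] ++ [seq j.*2.+2 | j <- iota 0 M].

Definition block_univ M := ssum (riffle_univ M) (antiriffle_univ M).

Lemma size_interleave a b m : size (interleave a b m) = m.*2.
Proof. by elim: m a b => [|m IH] a b //=; rewrite IH doubleS. Qed.

Lemma mem_interleave a b m x :
  (x \in interleave a b m) = (a <= x < a + m) || (b <= x < b + m).
Proof.
elim: m a b => [|m IH] a b /=; first by rewrite !addn0; apply/esym/negbTE; lia.
by rewrite !inE IH; apply/idP/idP; lia.
Qed.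

Lemma uniq_interleave a b m : b + m <= a -> uniq (interleave a b m).
Proof.
elim: m a b => [|m IH] a b bma //=.
rewrite !inE !mem_interleave IH; last by lia.
by rewrite andbT; apply/andP; split; apply/negP; lia.
Qed.

Lemma riffle_univ_perm M : is_perm (riffle_univ M).
Proof.
apply: uniq_bounded_is_perm; first by apply: uniq_interleave; lia.
by move=> x; rewrite mem_interleave size_interleave; lia.
Qed.

Lemma antiriffle_univ_perm M : is_perm (antiriffle_univ M).
Proof.
apply: uniq_bounded_is_perm.
  rewrite cat_uniq !map_inj_uniq ?iota_uniq /=; try by move=> i j; lia.
  rewrite andbT; apply/hasPn => _ /mapP [j _ ->]; apply/mapP => -[i _]; lia.
rewrite size_cat !size_map size_iota => x.
by rewrite mem_cat => /orP [] /mapP [j]; rewrite mem_iota => ? ->; lia.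
Qed.

Lemma block_univ_perm M : is_perm (block_univ M).
Proof. exact: ssum_perm (riffle_univ_perm M) (antiriffle_univ_perm M). Qed.

Lemma size_block_univ M : size (block_univ M) = 4 * M.
Proof.
rewrite size_ssum size_interleave size_cat !size_map size_iota; lia.
Qed.

Lemma interleave_subseq (c : nat -> bool) a b s n m : n <= m ->
  subseq [seq if c j then b + j else a + j | j <- iota s n]
         (interleave (a + s) (b + s) m).
Proof.
elim: n m s => [|n IH] [|m] s nm //.
have := IH m s.+1 nm; rewrite !addnS => sub.
rewrite [interleave _ _ _]/= [iota _ _]/= [map _ _]/=; case: (c s).
- by apply: subseq_trans (subseq_cons _ (a + s)); rewrite /= eqxx.
- by rewrite /= eqxx; apply: subseq_trans sub (subseq_cons _ _).
Qed.

Lemma riffle_embeds r M : riffle r -> size r <= M -> embeds (riffle_univ M) r.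
Proof.
move=> rr rM; have [k thr] := riffle_threshold rr.
pose f x := if x <= k then 1 + index x r else M.+1 + index x r.
exists f; split.
  move=> x y xr yr xy; rewrite /f; move: (thr x y xr yr xy).
  have := index_mem x r; have := index_mem y r; rewrite xr yr.
  by case: (leqP x k); case: (leqP y k) => //= *; lia.
have -> : map f r = [seq if nth 0 r j <= k then 1 + j else M.+1 + j | j <- iota 0 (size r)].
  rewrite -[in LHS](mkseq_nth 0 r) -map_comp; apply/eq_in_map => j; rewrite mem_iota => jr.
  by rewrite /= /f index_uniq // (is_perm_uniq rr.1).
by have := interleave_subseq (fun j => nth 0 r j <= k) M.+1 1 0 rM; rewrite !addn0.
Qed.

Lemma antiriffle_embeds s M : antiriffle s -> size s <= M -> embeds (antiriffle_univ M) s.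
Proof.
case=> r [rr ->]; rewrite size_map size_iota => rM.
have pr := rr.1; have [k thr] := riffle_threshold rr.
have inr i : (i \in r) = (0 < i <= size r) by rewrite (mem_perm _ pr).
have run_sub a m : 0 < a -> a + m <= (size r).+1 ->
    (forall x y, a <= x -> y < a + m -> x < y -> (y <= k) || (k < x)) ->
    subseq (map (index^~ r) (iota a m)) (iota 0 M).
  move=> a0 am run; apply: (subseq_trans (index_subseq_iota _ _)).
  - by move=> i; rewrite mem_iota inr; lia.
  - apply: (homo_sorted_in (P := mem (iota a m))); last exact: iota_ltn_sorted.
      move=> x y; rewrite !mem_iota => xr yr xy.
      by apply: thr; rewrite ?inr //; [lia | lia | apply: run; lia].
    by apply/allP.
  - by rewrite -(subnKC rM) iotaD prefix_subseq.
(* An entry v of [perm_inv r] is a position of [r] (shifted by one); it goes to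
   the odd or the even half as the entry of [r] there is below or above k. *)
pose f v := if nth 0 r v.-1 <= k then (v.-1).*2.+1 else (v.-1).*2.+2.
exists f; split.
  move=> x y; rewrite !(mem_perm _ (perm_inv_perm pr)) /f => x0 y0 xy.
  by case: (_ <= k); case: (_ <= k); lia.
(* The threshold k may exceed [size r]. *)
pose k' := minn k (size r).
have -> : map f (perm_inv r) =
    map (fun j => j.*2.+1) (map (index^~ r) (iota 1 k')) ++
    map (fun j => j.*2.+2) (map (index^~ r) (iota k'.+1 (size r - k'))).
  rewrite /perm_inv -map_comp.
  have -> : iota 1 (size r) = iota 1 k' ++ iota k'.+1 (size r - k').
    by rewrite -add1n -iotaD subnKC ?geq_minr.
  rewrite map_cat -!map_comp.
  congr (_ ++ _); apply/eq_in_map => i; rewrite mem_iota => ir;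
    have /(nth_index 0) ri : i \in r by rewrite inr; lia.
  - by rewrite /f /= ri ifT //; lia.
  - by rewrite /f /= ri ifF //; lia.
by apply: cat_subseq; apply: map_subseq; apply: run_sub; lia.
Qed.

Lemma riffle_block_perm p : riffle_block p -> is_perm p.
Proof. by case=> [[]//|[r [[pr _] ->]]]; apply: perm_inv_perm. Qed.

Lemma riffle_block_embeds p M : riffle_block p -> size p <= M -> embeds (block_univ M) p.
Proof.
case=> bp pM; first by apply: embeds_ssuml; exact: riffle_embeds.
by apply: embeds_ssumr; exact: antiriffle_embeds.
Qed.

Fixpoint sr_univ k : seq nat :=
  if k is k'.+1 then ssum (sr_univ k') (ssum (block_univ (2 ^ k)) (sr_univ k')) else [::].

Lemma sr_univ_perm k : is_perm (sr_univ k).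
Proof. by elim: k => [|k IH] //=; do 2 apply: ssum_perm => //; exact: block_univ_perm. Qed.

Lemma size_sr_univ k : size (sr_univ k) = 4 * k * 2 ^ k.
Proof. by elim: k => [|k IH] //=; rewrite 2!size_ssum size_block_univ IH expnS; lia. Qed.

Lemma embeds_sr_univ k bs : {in bs, forall b, riffle_block b} ->
  size (ssum_list bs) < 2 ^ k -> embeds (sr_univ k) (ssum_list bs).
Proof.
elim: k bs => [|k IH] bs hb bsk.
  by move: bsk; rewrite expn0 ltnS leqn0 => /nilP ->; exact: embeds_nil.
have hbs bs' : {subset bs' <= bs} -> is_perm (ssum_list bs').
  by move=> sub; apply/ssum_list_perm/allP => b /sub /hb /riffle_block_perm.
have k_pos : 0 < 2 ^ k by rewrite expn_gt0.
rewrite [sr_univ _]/=.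
have [small|[bs1 [b [bs2 [Ebs /andP [b1_le b1_gt]]]]]] := ssum_list_split bs (2 ^ k).-1.
  by apply: embeds_ssuml; apply: IH => //; lia.
have sub1 : {subset bs1 <= bs} by move=> c cb; rewrite Ebs mem_cat cb.
have sub2 : {subset bs2 <= bs} by move=> c cb; rewrite Ebs mem_cat inE cb !orbT.
have bb : riffle_block b by apply: hb; rewrite Ebs mem_cat inE eqxx orbT.
move: bsk; rewrite Ebs ssum_list_cat /= !size_ssum expnS => bsk.
apply: embeds_ssum; rewrite ?hbs //.
- exact: sr_univ_perm.
- by apply: ssum_perm; [exact: block_univ_perm | exact: sr_univ_perm].
- by apply: ssum_perm; [exact: riffle_block_perm | exact: hbs].
- by apply: IH => [c /sub1 /hb //|]; lia.
apply: embeds_ssum; rewrite ?hbs //.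
- exact: block_univ_perm.
- exact: sr_univ_perm.
- exact: riffle_block_perm.
- by apply: riffle_block_embeds => //; lia.
- by apply: IH => [c /sub2 /hb //|]; lia.
Qed.

Lemma size_sr_univ_trunc_log n : 0 < n ->
  size (sr_univ (trunc_log 2 n).+1) <= 8 * (trunc_log 2 n).+1 * n.
Proof.
move=> n0; rewrite size_sr_univ expnS.
have := leq_mul (leqnn (8 * (trunc_log 2 n).+1)) (trunc_logP (isT : 1 < 2) n0); lia.
Qed.

From Stdlib Require Import Reals Lra Psatz ZArith.

Lemma INR_expn m j : INR (expn m j) = pow (INR m) j.
Proof. by elim: j => [|j IH] //; rewrite expnS mulnE mult_INR IH. Qed.

Lemma trunc_log2_le_log2R n : 0 < n -> (INR (trunc_log 2 n) <= log2R (INR n))%R.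
Proof.
move=> n0; have ln2 : (0 < ln 2)%R by have := ln_lt_2; lra.
have /leP/le_INR := trunc_logP (isT : 1 < 2) n0; rewrite INR_expn => pow_le.
have ln_le : (ln (pow 2 (trunc_log 2 n)) <= ln (INR n))%R.
  case: (Rle_lt_or_eq_dec _ _ pow_le) => [lt|->]; last exact: Rle_refl.
  by apply/Rlt_le/ln_increasing => //; apply: pow_lt; lra.
rewrite ln_pow in ln_le; last by lra.
apply: (Rmult_le_reg_r (ln 2)) => //.
by rewrite /log2R /Rdiv Rmult_assoc Rinv_l ?Rmult_1_r //; lra.
Qed.

Lemma sr_univ_length_bound n : 0 < n ->
  (INR (size (sr_univ (trunc_log 2 n).+1)) <= 8 * (log2R (INR n) + 1) * INR n)%R.
Proof.
move=> n0; have jl := trunc_log2_le_log2R n0.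
have /leP/le_INR := size_sr_univ_trunc_log n0.
have INR8 : INR 8 = 8%R by rewrite /=; lra.
rewrite !mulnE !mult_INR INR8 S_INR => size_le.
by have := pos_INR n; nra.
Qed.

Lemma nat_ceil (x : R) : (0 <= x)%R -> exists L : nat, (x < INR L <= x + 1)%R.
Proof.
move=> x0; have [up_gt up_le] := archimed x.
exists (Z.to_nat (up x)); rewrite INR_IZR_INZ Z2Nat.id; first lra.
by apply/Z.lt_le_incl/lt_IZR; lra.
Qed.

Lemma padded_length_bounds (n u L : nat) (l : R) :
  (1 <= INR n)%R -> (0 <= l)%R -> (INR u <= 8 * (l + 1) * INR n)%R ->
  (16 * INR n * l + INR n < INR L <= 16 * INR n * l + INR n + 1)%R ->
  (INR n <= INR (maxn u L) - 16 * INR n * l <= 8 * INR n)%R.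
Proof.
move=> n1 l0 uB LB; have nl : (0 <= l * INR n)%R by nra.
case: leqP => uL; first lra.
by have /ltP/lt_INR := uL; lra.
Qed.

Theorem theorem13 :
  exists c1 c2 : R, (0 < c1)%R /\ (0 < c2)%R /\
    forall n : nat, 0 < n ->
      exists sigma : seq nat,
        is_perm sigma /\
        (c1 * INR n <= INR (size sigma) - 16 * INR n * log2R (INR n)
           <= c2 * INR n)%R /\
        forall p : seq nat, size p = n -> skew_riffle p -> contains sigma p.
Proof.
exists 1%R, 8%R; do 2 (split; first lra).
move=> n n0; pose U := sr_univ (trunc_log 2 n).+1.
have n1 : (1 <= INR n)%R by apply: (le_INR 1); apply/leP.
have U_le := sr_univ_length_bound n0; have := trunc_log2_le_log2R n0.
set l := log2R (INR n) in U_le * => jl.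
have l0 : (0 <= l)%R by have := pos_INR (trunc_log 2 n); lra.
have [L LB] : exists L : nat, (16 * INR n * l + INR n < INR L <= 16 * INR n * l + INR n + 1)%R.
  by apply: nat_ceil; nra.
exists (ssum U (iota 1 (L - size U))); split.
  exact: ssum_perm (sr_univ_perm _) (iota_is_perm _).
split.
  rewrite size_ssum size_iota -maxnE Rmult_1_l.
  exact: padded_length_bounds n1 l0 U_le LB.
move=> p sp /skew_riffle_blocks [bs [hb Ep]].
apply/embeds_contains/embeds_ssuml; rewrite Ep; apply: embeds_sr_univ => //.
by rewrite -Ep sp; exact: trunc_log_ltn.
Qed.
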